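(* Let $G$ be a finite group and let $m\in\mu(G)$. Then $|G|\cdot m^{\phi(m)}$ divides $\det(\mathbf{J}+\mathbf{Q}(\mathcal{P}(G)))$.
   Context: For a finite group $G$, the power graph $\mathcal{P}(G)$ is the simple undirected graph with vertex set $G$, two distinct vertices $x,y$ being adjacent iff $\langle x\rangle\subseteq\langle y\rangle$ or $\langle y\rangle\subseteq\langle x\rangle$. $\mathbf{Q}(\mathcal{P}(G))=\mathbf{\Delta}-\mathbf{A}$ is its Laplacian matrix ($\mathbf{A}$ the adjacency matrix, $\mathbf{\Delta}$ the diagonal matrix of vertex degrees), and $\mathbf{J}$ is the $|G|\times|G|$ all-ones matrix. $\mu(G)$ is the set of element orders of $G$ that are maximal with respect to divisibility among all element orders of $G$. $\phi$ is Euler's totient function. *)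

From mathcomp Require Import all_boot all_order all_algebra all_fingroup.
Set Implicit Arguments. Unset Strict Implicit. Unset Printing Implicit Defensive.
Import GRing.Theory Num.Theory.
Local Open Scope ring_scope.

Section PowerGraph.
Variables (gT : finGroupType) (G : {group gT}).

Definition pg_adj (x y : gT) : bool :=
  (x != y) && ((<[x]> \subset <[y]>)%g || (<[y]> \subset <[x]>)%g).

Definition pg_deg (x : gT) : nat := #|[set y in G | pg_adj x y]|.

Definition pg_vert (i : 'I_#|G|) : gT := enum_val i.

Definition pg_laplacian : 'M[int]_#|G| :=
  \matrix_(i, j) (if i == j then (pg_deg (pg_vert i))%:Z
                  else - ((pg_adj (pg_vert i) (pg_vert j) : nat)%:Z)).

Definition pg_JQ : 'M[int]_#|G| := const_mx 1 + pg_laplacian.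

Definition mu_orders (m : nat) : Prop :=
  (exists2 x, x \in G & #[x]%g = m) /\
  (forall y, y \in G -> (m %| #[y]%g)%N -> #[y]%g = m).

End PowerGraph.

(* Let x have maximal order m and C = <[x]>.  By maximality, the subgroups
   comparable with C are exactly the cyclic subgroups of C, so a generator s
   of C is adjacent precisely to C \ {s}: the column of J + Q indexed by s is
   m e_s plus the indicator of G \ C.  The column of 1 is |G| e_1, and every
   row of J + Q sums to |G|.  If G = C the generator columns are m e_s.
   Otherwise, subtracting one generator column from the phi(m) - 1 others
   makes those divisible by m, and replacing the column of some y outside C
   by the sum of all columns makes it constant |G|; so
   |G|^2 m^(phi(m) - 1) divides the determinant, and m divides |G|. *)

From mathcomp Require Import all_boot all_order all_algebra all_fingroup.
From mathcomp Require Import cyclic.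
Set Implicit Arguments. Unset Strict Implicit. Unset Printing Implicit Defensive.
Import GRing.Theory.
Local Open Scope ring_scope.

Lemma dvdn_mul_exp_pred n m k : (0 < k)%N -> (m %| n)%N ->
  (n * m ^ k %| n * n * m ^ k.-1)%N.
Proof.
move=> k_gt0 mn; rewrite -{1}(prednK k_gt0) expnS mulnA [(n * m)%N]mulnC.
by rewrite dvdn_mul ?dvdn_mul.
Qed.

Section ColumnOperations.
Variable n : nat.
Implicit Types (M : 'M[int]_n) (d : int).

Lemma dvdz_prod_det M (c : 'I_n -> int) :
  (forall i j, (c j %| M i j)%Z) -> (\prod_j c j %| \det M)%Z.
Proof.
move=> cM.
have -> : M = \matrix_(i, j) (M i j %/ c j)%Z *m diag_mx (\row_j c j).
  by apply/matrixP => i j; rewrite mul_mx_diag !mxE divzK.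
rewrite det_mulmx det_diag; under eq_bigr do rewrite mxE.
exact: dvdz_mull.
Qed.

Lemma dvdz_det_rank_one_update M (u : 'cV_n) (v : 'rV_n) d :
  v *m u = 0 -> (d %| \det (M *m (1%:M + u *m v)))%Z -> (d %| \det M)%Z.
Proof.
move=> vu0 dM.
have inv : (1%:M + u *m v) *m (1%:M - u *m v) = 1%:M.
  rewrite mulmxDl !mulmxBr !mul1mx !mulmx1 -!mulmxA (mulmxA v) vu0.
  by rewrite mul0mx mulmx0 subr0 subrK.
by rewrite -[M]mulmx1 -inv mulmxA det_mulmx dvdz_mulr.
Qed.

Lemma rank_one_updateE M (u : 'cV_n) (v : 'rV_n) i j :
  (M *m (1%:M + u *m v)) i j = M i j + (M *m u) i 0 * v 0 j.
Proof. by rewrite mulmxDr mulmx1 mulmxA mxE [(_ *m v) i j]mxE big_ord1. Qed.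

Definition sub_col_mx (T : {set 'I_n}) p M : 'M[int]_n :=
  \matrix_(i, j) if j \in T then M i j - M i p else M i j.

Definition col_sum_mx j0 M : 'M[int]_n :=
  \matrix_(i, j) if j == j0 then \sum_l M i l else M i j.

Lemma sub_col_mxE T p M i j :
  sub_col_mx T p M i j = if j \in T then M i j - M i p else M i j.
Proof. by rewrite mxE. Qed.

Lemma col_sum_mxE j0 M i j :
  col_sum_mx j0 M i j = if j == j0 then \sum_l M i l else M i j.
Proof. by rewrite mxE. Qed.

Lemma dvdz_det_sub_col M (T : {set 'I_n}) p d : p \notin T ->
  (d %| \det (sub_col_mx T p M))%Z -> (d %| \det M)%Z.
Proof.
move=> pT dM.
apply: (dvdz_det_rank_one_update (u := delta_mx p 0) (v := - \row_j (j \in T)%:R)).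
  by apply/matrixP => i k; rewrite !ord1 mulNmx -colE !mxE (negPf pT) oppr0.
congr (_ %| \det _)%Z: dM; apply/matrixP => i j.
rewrite rank_one_updateE -colE !mxE.
by case: (j \in T); rewrite ?mulrN1 ?mulr0 ?addr0.
Qed.

Lemma dvdz_det_col_sum M j0 d :
  (d %| \det (col_sum_mx j0 M))%Z -> (d %| \det M)%Z.
Proof.
move=> dM.
apply: (dvdz_det_rank_one_update (u := \col_l (l != j0)%:R) (v := delta_mx 0 j0)).
  by apply/matrixP => i k; rewrite !ord1 -rowE !mxE eqxx.
congr (_ %| \det _)%Z: dM; apply/matrixP => i j.
rewrite rank_one_updateE !mxE eqxx /=.
case: eqP => [-> | _]; last by rewrite mulr0 addr0.
rewrite mulr1 (bigD1 j0) //=; congr (_ + _).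
rewrite [in RHS](bigD1 j0) //= !mxE eqxx mulr0 add0r.
by apply: eq_bigr => l /negPf nl; rewrite mxE nl mulr1.
Qed.

End ColumnOperations.

Section PowerGraphMatrix.
Variables (gT : finGroupType) (G : {group gT}).
Local Notation n := #|G|.
Local Notation v := (@pg_vert gT G).
Local Notation M := (pg_JQ G).

Lemma pg_vertP i : v i \in G. Proof. exact: enum_valP. Qed.

Lemma pg_vert_inj : injective v. Proof. exact: enum_val_inj. Qed.

Definition pg_index (y : gT) : 'I_n := enum_rank_in (group1 G) y.

Lemma pg_indexK y : y \in G -> v (pg_index y) = y.
Proof. exact: enum_rankK_in. Qed.

Lemma pg_adjC (x y : gT) : pg_adj x y = pg_adj y x.
Proof. by rewrite /pg_adj eq_sym orbC. Qed.

Lemma pg_adj1 (y : gT) : pg_adj 1 y = (y != 1%g).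
Proof. by rewrite /pg_adj cycle1 sub1G andbT eq_sym. Qed.

Lemma pg_deg1 : (pg_deg G 1).+1 = n.
Proof.
rewrite /pg_deg.
have -> : [set y in G | pg_adj 1 y] = G :\ 1%g.
  by apply/setP => y; rewrite !inE pg_adj1 andbC.
by rewrite [n](cardsD1 1%g) group1.
Qed.

Lemma pg_deg_sum y : pg_deg G y = (\sum_j pg_adj y (v j))%N.
Proof.
rewrite /pg_deg -sum1_card -(big_enum_val (fun z => nat_of_bool (pg_adj y z))).
rewrite [LHS]big_mkcond [RHS]big_mkcond; apply: eq_bigr => z _.
by rewrite inE; case: (z \in G).
Qed.

Lemma pg_adj_irr (x : gT) : pg_adj x x = false.
Proof. by rewrite /pg_adj eqxx. Qed.

Lemma pg_laplacianE i j : pg_laplacian G i j =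
  (pg_deg G (v i))%:Z * (i == j)%:R - (pg_adj (v i) (v j) : nat)%:Z.
Proof.
rewrite mxE; case: eqP => [-> | _]; first by rewrite pg_adj_irr mulr1 subr0.
by rewrite mulr0 sub0r.
Qed.

Lemma pg_laplacian_rowsum i : \sum_j pg_laplacian G i j = 0.
Proof.
under eq_bigr do rewrite pg_laplacianE.
rewrite sumrB (bigD1 i) //= eqxx mulr1 big1 ?addr0 => [|j /negPf]; last first.
  by rewrite eq_sym => ->; rewrite mulr0.
by rewrite -(big_morph Posz PoszD (erefl 0%:Z)) pg_deg_sum subrr.
Qed.

Lemma pg_JQE i j : M i j = 1 + pg_laplacian G i j.
Proof. by rewrite /pg_JQ !mxE. Qed.

Lemma pg_JQ_rowsum i : \sum_j M i j = n%:Z.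
Proof.
under eq_bigr => j _ do rewrite pg_JQE.
by rewrite big_split /= pg_laplacian_rowsum addr0 sumr_const card_ord natz.
Qed.

Lemma pg_JQ_col1 i :
  M i (pg_index 1) = if i == pg_index 1 then n%:Z else 0.
Proof.
rewrite pg_JQE pg_laplacianE; case: eqP => [-> | /eqP ni1] /=.
  by rewrite !pg_indexK // pg_adj_irr mulr1 subr0 -intS pg_deg1.
have vi1 : v i != 1%g by rewrite -(pg_indexK (group1 G)) (inj_eq pg_vert_inj).
by rewrite mulr0 sub0r pg_indexK // pg_adjC pg_adj1 vi1 subrr.
Qed.

Section MaximalCycle.
Variable x : gT.
Hypotheses (xG : x \in G)
  (max_x : forall y, y \in G -> (#[x]%g %| #[y]%g)%N -> #[y]%g = #[x]%g).
Local Notation C := <[x]>%g.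
Local Notation m := #[x]%g.

Lemma max_cycle_subG : C \subset G. Proof. by rewrite cycle_subG. Qed.

Lemma max_cycle_comparable y : y \in G ->
  ((<[y]> \subset C) || (C \subset <[y]>))%g = (y \in C).
Proof.
move=> yG; rewrite cycle_subG; case yC: (y \in C) => //=.
apply/negP => sCy; have oy : #[y]%g = m by apply: max_x => //; apply: cardSg.
have /eqP eCy : C == <[y]>%g by rewrite eqEcard sCy -orderE oy /=.
by rewrite eCy cycle_id in yC.
Qed.

Lemma pg_adj_gen s y : generator C s -> y \in G ->
  pg_adj s y = (s != y) && (y \in C).
Proof.
by move=> /eqP gs yG; rewrite /pg_adj -gs orbC max_cycle_comparable.
Qed.

Lemma pg_deg_gen s : generator C s -> (pg_deg G s).+1 = m.
Proof.
move=> gs; rewrite /pg_deg.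
have -> : [set y in G | pg_adj s y] = C :\ s.
  apply/setP => y; rewrite !inE; case yG: (y \in G).
    by rewrite pg_adj_gen // eq_sym.
  by apply/esym/andP => -[_ /(subsetP max_cycle_subG)]; rewrite yG.
by rewrite orderE [RHS](cardsD1 s) cycle_generator.
Qed.

Lemma pg_JQ_gen_col i j : generator C (v j) ->
  M i j = if i == j then m%:Z else (v i \notin C : nat)%:Z.
Proof.
move=> gj; rewrite pg_JQE pg_laplacianE; case: eqP => [-> | /eqP ij] /=.
  by rewrite pg_adj_irr mulr1 subr0 -intS pg_deg_gen.
have vji : v j != v i by rewrite (inj_eq pg_vert_inj) eq_sym.
rewrite mulr0 sub0r pg_adjC pg_adj_gen ?pg_vertP // vji.
by case: (v i \in C).
Qed.

Definition gen_cols : {set 'I_n} := [set j | generator C (v j)].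

Lemma card_gen_cols : #|gen_cols| = totient m.
Proof.
rewrite totient_gen -(card_imset _ pg_vert_inj); apply: eq_card => y.
rewrite inE; apply/imsetP/idP => [[j /[!inE] gj ->] // | gy].
have yG : y \in G by rewrite (subsetP max_cycle_subG) ?cycle_generator.
by exists (pg_index y); rewrite ?inE pg_indexK.
Qed.

Lemma pg_JQ_gen_colsB i j k : j \in gen_cols -> k \in gen_cols ->
  M i j - M i k = m%:Z * ((i == j)%:R - (i == k)%:R).
Proof.
rewrite !inE => gj gk; rewrite !pg_JQ_gen_col //.
case: (eqVneq i j) => [-> | ij].
  by rewrite cycle_generator //=; case: eqP => _; rewrite ?subrr ?mulr0 ?subr0 ?mulr1.
case: (eqVneq i k) => [-> | ik]; first by rewrite cycle_generator //= sub0r mulrN1.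
by rewrite subrr subr0 mulr0.
Qed.

Hypothesis ntx : x != 1%g.

Lemma pg_index1_gen_cols : pg_index 1 \notin gen_cols.
Proof. by rewrite inE pg_indexK // /generator cycle1 cycle_eq1. Qed.

Lemma dvdz_det_pg_JQ_cyclic : G \subset C ->
  (Posz (n * m ^ totient m) %| \det M)%Z.
Proof.
move=> sGC; pose e := pg_index 1.
pose c j := (if j == e then n%:Z else 1) * (if j \in gen_cols then m%:Z else 1).
have -> : Posz (n * m ^ totient m) = \prod_j c j.
  rewrite big_split /= -!big_mkcond big_pred1_eq prodr_const card_gen_cols.
  by rewrite PoszM -!natz natrX.
apply: dvdz_prod_det => i j; rewrite /c.
have [-> | je] := eqVneq j e.
  rewrite (negPf pg_index1_gen_cols) mulr1 pg_JQ_col1.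
  by case: ifP => _; rewrite ?dvdzz ?dvdz0.
rewrite mul1r inE; case: ifP => [gj | _]; last exact: dvd1z.
rewrite pg_JQ_gen_col // (subsetP sGC _ (pg_vertP i)) /=.
by case: ifP => _; rewrite ?dvdzz ?dvdz0.
Qed.

Lemma dvdz_det_pg_JQ_noncyclic y : y \in G -> y \notin C ->
  (Posz (n * n * m ^ (totient m).-1) %| \det M)%Z.
Proof.
move=> yG yC; pose e := pg_index 1; pose o := pg_index y; pose p := pg_index x.
pose T := gen_cols :\ p.
have p_gen : p \in gen_cols by rewrite inE pg_indexK ?generator_cycle.
have o_gen : o \notin gen_cols.
  by rewrite inE pg_indexK //; apply: contra yC; apply: cycle_generator.
have oe : o != e.
  by apply: contraNneq yC => /(congr1 v); rewrite !pg_indexK // => ->.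
apply: (dvdz_det_col_sum (j0 := o)); apply: (dvdz_det_sub_col (T := T) (p := p)).
  by rewrite setD11.
pose c j := (if j == e then n%:Z else 1) * (if j == o then n%:Z else 1) *
            (if j \in T then m%:Z else 1).
have -> : Posz (n * n * m ^ (totient m).-1) = \prod_j c j.
  rewrite !big_split /= -!big_mkcond !big_pred1_eq prodr_const.
  by rewrite -card_gen_cols (cardsD1 p gen_cols) p_gen !PoszM -!natz natrX.
apply: dvdz_prod_det => i j; rewrite sub_col_mxE !col_sum_mxE /c.
have -> : (p == o) = false by apply: contraTF p_gen => /eqP ->.
have [jT | jT] := boolP (j \in T).
  have [jp jgen] : j != p /\ j \in gen_cols by apply/andP; rewrite -in_setD1.
  have -> : (j == e) = false.
    by apply: contraTF jgen => /eqP ->; apply: pg_index1_gen_cols.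
  have -> : (j == o) = false by apply: contraTF jgen => /eqP ->.
  by rewrite !mul1r pg_JQ_gen_colsB // dvdz_mulr.
rewrite mulr1; have [-> | jo] := eqVneq j o.
  by rewrite (negPf oe) mul1r pg_JQ_rowsum.
rewrite mulr1; have [-> | je] := eqVneq j e; last exact: dvd1z.
by rewrite pg_JQ_col1; case: ifP => _; rewrite ?dvdzz ?dvdz0.
Qed.

End MaximalCycle.

End PowerGraphMatrix.

Theorem theorem3p7 (gT : finGroupType) (G : {group gT}) (m : nat) :
  mu_orders G m ->
  ((Posz (#|G| * m ^ totient m)%N) %| (\det (pg_JQ G))%R)%Z.
Proof.
case=> -[x xG <-] max_x.
have [x1 | ntx] := eqVneq x 1%g.
  have G1 : #|G| = 1%N.
    apply/eqP; rewrite -trivg_card1; apply/eqP/trivgP/subsetP => y yG.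
    by rewrite inE -order_eq1 (max_x y yG) x1 ?order1.
  by rewrite x1 order1 exp1n muln1 (@dvdz_trans 1) ?dvd1z // dvdz1 /= G1.
have [sGC | /subsetPn[y yG yC]] := boolP (G \subset <[x]>%g).
  exact: dvdz_det_pg_JQ_cyclic.
apply: dvdz_trans (dvdz_det_pg_JQ_noncyclic xG max_x ntx yG yC).
have xG_dvd : (#[x]%g %| #|G|)%N by rewrite orderE cardSg ?cycle_subG.
have phi_gt0 : (0 < totient #[x]%g)%N by rewrite totient_gt0 order_gt0.
exact: (dvdn_mul_exp_pred phi_gt0 xG_dvd).
Qed.
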